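(* Let $(m,n)$ be relatively prime non-negative integers, $\mathscr{L}$ an $(m,n)$-periodic higher spin vertex configuration and $\mathcal{A}=\mathcal{A}(\mathscr{L})$. Let $\underline{i}=i_1\cdots i_\ell$ be a finite sequence with entries in $\{1,2\}$ and $\lambda\in\mathbb{Z}$. Then the following are equivalent: (i) $X(\underline{i})^\ast X(\underline{i})$ (an element of $\mathbb{C}[H]$) belongs to the principal ideal $(H-\lambda)$ of $\mathbb{C}[H]$; (ii) the based face path $\bar\pi(\underline{i},\lambda)$ intersects an edge in $\overline{\mathscr{L}}$.
   Context: Noncommutative Kleinian fiber product: $\tilde{\mathcal{A}}_{\alpha_1,\alpha_2}(p_1,p_2)$ is generated by $H,X_1^\pm,X_2^\pm$ with relations ($i=1,2$) $HX_i^\pm-X_i^\pm H=\pm\alpha_iX_i^\pm$, $X_i^+X_i^-=p_i(H-\alpha_i/2)$, $X_i^-X_i^+=p_i(H+\alpha_i/2)$, $X_1^+X_2^-=X_2^-X_1^+$, $X_1^-X_2^+=X_2^+X_1^-$; $\mathcal{A}_{\alpha_1,\alpha_2}(p_1,p_2)$ is its quotient by the ideal of all $a$ with $f(H)a=0$ for some nonzero polynomial $f$. It has the anti-involution $\ast$ with $H^\ast=H$, $(X_i^\pm)^\ast=X_i^\mp$, and is $\mathbb{Z}^2$-graded ($\deg H=0$, $\deg X_i^\pm=\pm\mathbf{e}_i$) with degree-zero part $\mathbb{C}[H]$. Configurations: $E_1=\mathbb{Z}^2+(1/2,0)$, $E_2=\mathbb{Z}^2+(0,1/2)$, $E=E_1\cup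 E_2$, $V=\mathbb{Z}^2+(1/2,1/2)$, $\Gamma_{m,n}=\mathbb{Z}(m,n)$. An $(m,n)$-periodic higher spin vertex configuration is $\mathscr{L}:E\to\mathbb{N}$ with $\mathscr{L}(e+(m,n))=\mathscr{L}(e)$, $\mathscr{L}(e+k(-n,m))=0$ for $|k|\gg0$ (each $e$), and $\mathscr{L}(v-(1/2,0))+\mathscr{L}(v-(0,1/2))=\mathscr{L}(v+(1/2,0))+\mathscr{L}(v+(0,1/2))$ ($v\in V$). With $(\alpha_1,\alpha_2)=(-n,m)$: $P_i^{\mathscr{L}}(u)=\prod_{(x_1,x_2)+\Gamma_{m,n}\in E_i/\Gamma_{m,n}}(u-(x_1\alpha_1+x_2\alpha_2))^{\mathscr{L}(x_1,x_2)}$, $\mathcal{A}(\mathscr{L})=\mathcal{A}_{-n,m}(P_1^{\mathscr{L}},P_2^{\mathscr{L}})$. For $e=(x_1,x_2)\in E_i$, $[e]=\{a\in\mathbb{R}^2:a_i=x_i,|a_{3-i}-x_{3-i}|\le1/2\}$; $\mathbb{T}_{m,n}=\mathbb{R}^2/\Gamma_{m,n}$; $\overline{\mathscr{L}}$ is the image of $\bigcup_{\mathscr{L}(e)>0}[e]$ in $\mathbb{T}_{m,n}$. $X(\underline{i})=X_{i_\ell}^+\cdots X_{i_1}^+$. For $\lambda\in\mathbb{Z}$, $\bar\lambda=(x_1,x_2)+\Gamma_{m,n}$ for any $(x_1,x_2)\in\mathbb{Z}^2$ with $-nx_1+mx_2=\lambda$. The based face path $\bar\pi(\underline{i},\lambda)\subset\mathbb{T}_{m,n}$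 is the union of the segments $[\bar\lambda+\mathbf{e}_{i_1}+\cdots+\mathbf{e}_{i_{r-1}},\ \bar\lambda+\mathbf{e}_{i_1}+\cdots+\mathbf{e}_{i_r}]$, $r=1,\dots,\ell$, where $\mathbf{e}_1=(1,0)$, $\mathbf{e}_2=(0,1)$ act by translation on $\mathbb{T}_{m,n}$. *)

From HB Require Import structures.
From mathcomp Require Import all_boot all_order all_algebra all_field.
From mathcomp Require Import Rstruct.

Set Implicit Arguments. Unset Strict Implicit. Unset Printing Implicit Defensive.
Import Order.TTheory GRing.Theory Num.Theory.
Local Open Scope ring_scope.

(* An edge of E_1 = Z^2 + (1/2,0) is encoded by (a,b) : int*int, standing for
   the point (a+1/2, b); an edge of E_2 = Z^2 + (0,1/2) is encoded by (a,b),
   standing for (a, b+1/2).  A configuration L : E -> N is the pair (L1,L2). *)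

Definition periodic_config (m n : nat) (L1 L2 : int -> int -> nat) : Prop :=
  (forall a b : int, L1 (a + m%:Z) (b + n%:Z) = L1 a b) /\
  (forall a b : int, L2 (a + m%:Z) (b + n%:Z) = L2 a b) /\
  (forall a b : int, exists K : nat, forall k : int,
      (K <= absz k)%N -> L1 (a - k * n%:Z) (b + k * m%:Z) = 0%N) /\
  (forall a b : int, exists K : nat, forall k : int,
      (K <= absz k)%N -> L2 (a - k * n%:Z) (b + k * m%:Z) = 0%N) /\
  (* conservation at the vertex v = (a+1/2, b+1/2):
     L(v-(1/2,0)) + L(v-(0,1/2)) = L(v+(1/2,0)) + L(v+(0,1/2)) *)
  (forall a b : int, (L2 a b + L1 a b = L2 (a + 1)%R b + L1 a (b + 1)%R)%N).

Definition gequiv (m n : nat) (x y : int * int) : Prop :=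
  exists k : int, y.1 = x.1 + k * m%:Z /\ y.2 = x.2 + k * n%:Z.

Definition transversal (m n : nat) (L : int -> int -> nat) (s : seq (int * int))
  : Prop :=
  uniq s /\
  (forall x y, x \in s -> y \in s -> gequiv m n x y -> x = y) /\
  (forall a b : int, (0 < L a b)%N -> exists2 y, y \in s & gequiv m n (a, b) y).

Definition Ppoly_spec (m n : nat) (L : int -> int -> nat)
  (c : int * int -> algC) (P : {poly algC}) : Prop :=
  exists s, transversal m n L s /\
    P = \prod_(x <- s) ('X - (c x)%:P) ^+ (L x.1 x.2).

Definition alpha1 (n : nat) : algC := - (n%:R).
Definition alpha2 (m : nat) : algC := m%:R.

(* x1 alpha1 + x2 alpha2 for the E_1 point (a+1/2, b) and the E_2 point (a, b+1/2) *)
Definition cval1 (m n : nat) (x : int * int) : algC :=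
  alpha1 n * (x.1%:~R + 2^-1) + alpha2 m * x.2%:~R.
Definition cval2 (m n : nat) (x : int * int) : algC :=
  alpha1 n * x.1%:~R + alpha2 m * (x.2%:~R + 2^-1).

Definition kleinian_rels (B : algType algC) (al1 al2 : algC) (p1 p2 : {poly algC})
  (H X1p X1m X2p X2m : B) : Prop :=
  [/\ H * X1p - X1p * H = al1 *: X1p,
      H * X1m - X1m * H = - (al1 *: X1m),
      H * X2p - X2p * H = al2 *: X2p,
      H * X2m - X2m * H = - (al2 *: X2m) &
  [/\ X1p * X1m = horner_alg (H - (al1 / 2)%:A) p1,
      X1m * X1p = horner_alg (H + (al1 / 2)%:A) p1,
      X2p * X2m = horner_alg (H - (al2 / 2)%:A) p2,
      X2m * X2p = horner_alg (H + (al2 / 2)%:A) p2 &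
  X1p * X2m = X2m * X1p /\ X1m * X2p = X2p * X1m]].

Definition H_torsion_free (B : algType algC) (H : B) : Prop :=
  forall (f : {poly algC}) (a : B), f != 0 -> horner_alg H f * a = 0 -> a = 0.

Definition Xword (B : algType algC) (X1p X2p : B) (i : seq nat) : B :=
  \prod_(j <- rev i) (if j == 1%N then X1p else X2p).
Definition Xword_star (B : algType algC) (X1m X2m : B) (i : seq nat) : B :=
  \prod_(j <- i) (if j == 1%N then X1m else X2m).

Definition pt := (Rdefinitions.R * Rdefinitions.R)%type.

Definition torus_equiv (m n : nat) (p q : pt) : Prop :=
  exists k : int, q.1 = p.1 + k%:~R * m%:R /\ q.2 = p.2 + k%:~R * n%:R.

Definition in_seg (p q x : pt) : Prop :=
  exists t : Rdefinitions.R, 0 <= t <= 1 /\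
    x.1 = p.1 + t * (q.1 - p.1) /\ x.2 = p.2 + t * (q.2 - p.2).

Definition in_edge1 (a b : int) (x : pt) : Prop :=
  x.1 = a%:~R + 2^-1 /\ `|x.2 - b%:~R| <= 2^-1.
Definition in_edge2 (a b : int) (x : pt) : Prop :=
  x.2 = b%:~R + 2^-1 /\ `|x.1 - a%:~R| <= 2^-1.

Definition in_support_edges (L1 L2 : int -> int -> nat) (x : pt) : Prop :=
  exists a b : int, ((0 < L1 a b)%N /\ in_edge1 a b x) \/
                    ((0 < L2 a b)%N /\ in_edge2 a b x).

Definition path_vertex (x1 x2 : int) (i : seq nat) (r : nat) : pt :=
  ((x1 + (count (pred1 1%N) (take r i))%:Z)%:~R,
   (x2 + (count (pred1 2%N) (take r i))%:Z)%:~R).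

Definition face_path_meets (m n : nat) (L1 L2 : int -> int -> nat)
  (x1 x2 : int) (i : seq nat) : Prop :=
  exists r : nat, (r < size i)%N /\
    exists p q : pt, in_seg (path_vertex x1 x2 i r) (path_vertex x1 x2 i r.+1) p /\
      in_support_edges L1 L2 q /\ torus_equiv m n p q.

From HB Require Import structures.
From mathcomp Require Import all_boot all_order all_algebra all_field.
From mathcomp Require Import Rstruct.
From mathcomp Require Import ring lra zify.
Set Implicit Arguments.
Unset Strict Implicit.
Unset Printing Implicit Defensive.

Import Order.TTheory GRing.Theory Num.Theory.
Local Open Scope ring_scope.

(* Commuting X_j^- past a polynomial in H shifts H by alpha_j, so X(i)^* X(i) = F(H),
   where F is the product over the steps r of the path of
   P_{i_r}(u + alpha.s_r + alpha_{i_r}/2), s_r being the displacement after the first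
   r - 1 steps.  As H is torsion free, (i) says F(lambda) = 0.  For
   lambda = -n x1 + m x2 the r-th argument is c(e_r), where e_r is the edge of
   type i_r at the midpoint of the r-th segment, and since m and n are coprime,
   c(e) = c(e') exactly when e = e' mod Gamma; hence the r-th factor vanishes iff
   L(e_r) > 0.  On the other side, a unit lattice segment translated by Gamma
   stays on integral lines, so it can only meet an edge [e] at its midpoint,
   and then e = e_r mod Gamma. *)

Section ShiftedEvaluation.
Variables (R : comNzRingType) (B : algType R).

Lemma horner_alg_comp_shift (H : B) (c : R) (p : {poly R}) :
  horner_alg H (p \Po ('X + c%:P)) = horner_alg (H + c%:A) p.
Proof.
elim/poly_ind: p => [|p d IH]; first by rewrite comp_poly0 !rmorph0.
rewrite comp_poly_MXaddC !rmorphD !rmorphM /= IH !horner_algX !horner_algC.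
by rewrite rmorphD /= horner_algX horner_algC.
Qed.

Lemma mul_horner_alg_shift (H X : B) (a : R) :
  X * H = (H + a%:A) * X -> forall p, X * horner_alg H p = horner_alg (H + a%:A) p * X.
Proof.
move=> XH; elim/poly_ind => [|p d IH]; first by rewrite !rmorph0 mulr0 mul0r.
rewrite !rmorphD !rmorphM /= !horner_algX !horner_algC mulrDr mulrDl.
rewrite mulrA IH -[_ * X * H]mulrA XH mulrA; congr (_ + _).
by rewrite mulr_algl mulr_algr.
Qed.

End ShiftedEvaluation.

Definition pick12 {T : Type} (j : nat) (t1 t2 : T) : T := if j == 1%N then t1 else t2.

Section NormPolynomial.
Variables (R : fieldType) (a1 a2 : R) (P1 P2 : {poly R}).

Fixpoint norm_poly (i : seq nat) : {poly R} :=
  if i is j :: i' then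
    (norm_poly i' \Po ('X + (pick12 j a1 a2)%:P)) *
    (pick12 j P1 P2 \Po ('X + (pick12 j a1 a2 / 2)%:P))
  else 1.

Lemma norm_poly_root (i : seq nat) (mu : R) :
  root (norm_poly i) mu <->
  exists r, (r < size i)%N /\
    root (pick12 (nth 0%N i r) P1 P2)
      (mu + \sum_(j <- take r i) pick12 j a1 a2 + pick12 (nth 0%N i r) a1 a2 / 2).
Proof.
elim: i mu => [|j i IH] mu /=.
  by rewrite rootC oner_eq0; split=> [|[r []]].
rewrite rootM !root_comp !hornerD !hornerX !hornerC; split.
  case/orP => [/(IH _).1 [r [lt_ri root_r]]|root_0].
    by exists r.+1; rewrite /= big_cons addrA.
  by exists 0%N; rewrite /= big_nil addr0.
case=> -[|r] /= [lt_ri]; first by rewrite big_nil addr0 => ->; rewrite orbT.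
by rewrite big_cons addrA => root_r; apply/orP; left; apply/(IH _).2; exists r.
Qed.

End NormPolynomial.

Lemma Xword_norm (B : algType algC) (a1 a2 : algC) (P1 P2 : {poly algC})
    (H X1p X1m X2p X2m : B) (i : seq nat) :
  kleinian_rels a1 a2 P1 P2 H X1p X1m X2p X2m ->
  Xword_star X1m X2m i * Xword X1p X2p i = horner_alg H (norm_poly a1 a2 P1 P2 i).
Proof.
case=> _ H1m _ H2m [_ X1mp _ X2mp _].
have lowering (X : B) a : H * X - X * H = - (a *: X) -> X * H = (H + a%:A) * X.
  by move=> /eqP; rewrite subr_eq addrC -subr_eq opprK mulrDl mulr_algl => /eqP.
elim: i => [|j i IH]; first by rewrite /Xword_star /Xword !big_nil mulr1 rmorph1.
rewrite /Xword_star /Xword rev_cons big_cons -cats1 big_cat big_seq1 /=.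
rewrite -/(Xword_star X1m X2m i) -/(Xword X1p X2p i).
rewrite mulrA -(mulrA _ _ (Xword _ _ _)) IH.
rewrite rmorphM /= !horner_alg_comp_shift.
have [XmH XmXp] : let Xm := pick12 j X1m X2m in
    Xm * H = (H + (pick12 j a1 a2)%:A) * Xm /\
    Xm * pick12 j X1p X2p = horner_alg (H + (pick12 j a1 a2 / 2)%:A) (pick12 j P1 P2).
  by rewrite /pick12; case: (j == 1%N); split=> //; apply: lowering.
by rewrite (mul_horner_alg_shift XmH) -mulrA XmXp.
Qed.

Lemma horner_alg_inj (B : algType algC) (H : B) :
  H_torsion_free H -> (1 : B) != 0 -> injective (horner_alg H).
Proof.
move=> tfree nz f g fg; apply/eqP; rewrite -subr_eq0; apply/negP => /negP fBg.
have := tfree _ 1 fBg; rewrite mulr1 rmorphB /= fg subrr => /(_ erefl) eq10.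
by rewrite eq10 eqxx in nz.
Qed.

Lemma horner_alg_dvd_root (B : algType algC) (H : B) (F : {poly algC}) (z : algC) :
  H_torsion_free H -> (1 : B) != 0 ->
  (exists g, horner_alg H F = (H - z%:A) * horner_alg H g) <-> root F z.
Proof.
move=> tfree nz; have HsubE : H - z%:A = horner_alg H ('X - z%:P).
  by rewrite rmorphB /= horner_algX horner_algC.
split=> [[g]|/factor_theorem [g ->]]; last first.
  by exists g; rewrite HsubE -rmorphM mulrC.
by rewrite HsubE -rmorphM => /(horner_alg_inj tfree nz) ->; rewrite rootM root_XsubC eqxx.
Qed.

Definition weight (m n : nat) (x : int * int) : int := - (n%:Z) * x.1 + m%:Z * x.2.

Lemma cval1E (m n : nat) (x : int * int) :
  cval1 m n x = (weight m n x)%:~R + alpha1 n / 2.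
Proof. by rewrite /cval1 /weight /alpha1 /alpha2 intrD !intrM intrN; ring. Qed.

Lemma cval2E (m n : nat) (x : int * int) :
  cval2 m n x = (weight m n x)%:~R + alpha2 m / 2.
Proof. by rewrite /cval2 /weight /alpha1 /alpha2 intrD !intrM intrN; ring. Qed.

Section Periodicity.
Variables (m n : nat).

Lemma weight_eq_gequiv (x y : int * int) :
  coprime m n -> weight m n x = weight m n y <-> gequiv m n x y.
Proof.
move=> coprime_mn; split=> [|[k [y1E y2E]]]; last by rewrite /weight y1E y2E; ring.
have [u [v]] := Bezoutz m n; rewrite /gcdz /= (eqP coprime_mn) => Bezout_uv.
move=> /eqP; rewrite -subr_eq0 => /eqP weight_diff.
exists (u * (y.1 - x.1) + v * (y.2 - x.2)); split; apply/eqP; rewrite -subr_eq0; apply/eqP.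
- transitivity ((y.1 - x.1) * (1 - (u * m%:Z + v * n%:Z))
                 + v * (weight m n x - weight m n y)); first by rewrite /weight; ring.
  by rewrite Bezout_uv weight_diff subrr !mulr0 addr0.
- transitivity ((y.2 - x.2) * (1 - (u * m%:Z + v * n%:Z))
                 - u * (weight m n x - weight m n y)); first by rewrite /weight; ring.
  by rewrite Bezout_uv weight_diff subrr !mulr0 subr0.
Qed.

Variable L : int -> int -> nat.
Hypothesis L_periodic : forall a b, L (a + m%:Z) (b + n%:Z) = L a b.

Lemma periodic_gequiv (x y : int * int) : gequiv m n x y -> L x.1 x.2 = L y.1 y.2.
Proof.
case: x => a b [k [-> ->]] /=.
have L_shift (k' : nat) a' b' : L (a' + k'%:Z * m%:Z) (b' + k'%:Z * n%:Z) = L a' b'.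
  elim: k' a' b' => [|k' IH] a' b'; first by rewrite !mul0r !addr0.
  by rewrite -addn1 PoszD !mulrDl !mul1r !addrA L_periodic IH.
case: k => k; first by rewrite L_shift.
by rewrite -[RHS](L_shift k.+1) NegzE !mulNr !subrK.
Qed.

Lemma Ppoly_root (c : int * int -> algC) (h : algC) (P : {poly algC}) (v : int * int) :
  coprime m n -> (forall x, c x = (weight m n x)%:~R + h) -> Ppoly_spec m n L c P ->
  root P ((weight m n v)%:~R + h) <-> (0 < L v.1 v.2)%N.
Proof.
move=> coprime_mn cE [s [[_ [_ s_covers]] ->]].
rewrite /root horner_prod prodf_seq_eq0; split.
  case/hasP=> x _; rewrite horner_exp hornerXsubC expf_eq0 subr_eq0 cE.
  rewrite (inj_eq (addIr _)) eqr_int.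
  case/andP=> _ /andP[L_x /eqP /(weight_eq_gequiv _ _ coprime_mn) gequiv_vx].
  by rewrite (periodic_gequiv gequiv_vx).
move=> L_v; have [x x_s gequiv_vx] := s_covers _ _ L_v.
have weight_vx : weight m n v = weight m n x.
  by apply/(weight_eq_gequiv _ _ coprime_mn); case: v L_v gequiv_vx.
apply/hasP; exists x => //; rewrite horner_exp hornerXsubC expf_eq0 subr_eq0 !cE.
by rewrite -(periodic_gequiv gequiv_vx) /= L_v weight_vx eqxx.
Qed.

End Periodicity.

Section IntegersAndHalves.
Variable R : realFieldType.

Lemma intr_norm_le_half (z : int) : `|z%:~R : R| <= 2^-1 -> z = 0.
Proof.
rewrite -intr_norm => le_half; apply/eqP; rewrite -normr_eq0; apply/negP => nz.
have : (1 : R) <= `|z|%:~R by rewrite ler1z; lia.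
lra.
Qed.

Lemma intr_neq_half (z : int) : z%:~R != 2^-1 :> R.
Proof.
apply/eqP => z_half; have : (z * 2)%:~R = 1 :> R.
  by rewrite intrM z_half mulVf // pnatr_eq0.
by rewrite -[1]/(1%:~R) => /intr_inj; lia.
Qed.

End IntegersAndHalves.

Definition pt_of (v : int * int) : pt := (v.1%:~R, v.2%:~R).

Definition segment_meets (m n : nat) (L1 L2 : int -> int -> nat) (p q : pt) : Prop :=
  exists x y : pt, in_seg p q x /\ in_support_edges L1 L2 y /\ torus_equiv m n x y.

Lemma horizontal_segment_meets (m n : nat) (L1 L2 : int -> int -> nat) (v : int * int) :
  (forall a b, L1 (a + m%:Z) (b + n%:Z) = L1 a b) ->
  segment_meets m n L1 L2 (pt_of v) (pt_of (v.1 + 1, v.2)) <-> (0 < L1 v.1 v.2)%N.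
Proof.
move=> L1_periodic; split; last first.
  move=> L_v; exists (v.1%:~R + 2^-1, v.2%:~R), (v.1%:~R + 2^-1, v.2%:~R).
  split; first by exists 2^-1; rewrite /= intrD; split; [apply/andP; split|split]; lra.
  split; last by exists 0; rewrite /= !mul0r !addr0.
  by exists v.1, v.2; left; split=> //; split=> //=; rewrite subrr normr0; lra.
case=> x [y [[t [/andP [t_ge0 t_le1] [x1E x2E]]] [[a [b y_edge]] [k [y1_eq y2_eq]]]]].
have y2_int : y.2 = (v.2 + k * n%:Z)%:~R.
  by rewrite y2_eq x2E /= subrr mulr0 addr0 intrD intrM.
case: y_edge => [[L_ab [y1E y2E]]|[_ [y2E _]]]; last first.
  have := intr_neq_half Rdefinitions.R (v.2 + k * n%:Z - b).
  by rewrite intrB -y2_int y2E addrAC subrr add0r eqxx.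
have b_eq : b = v.2 + k * n%:Z.
  apply/eqP; rewrite eq_sym -subr_eq0; apply/eqP/(intr_norm_le_half (R := Rdefinitions.R)).
  by rewrite intrB -y2_int.
have x1_eq : x.1 = v.1%:~R + t by rewrite x1E /= intrD addrAC subrr add0r mulr1.
have a_eq : a = v.1 + k * m%:Z.
  apply/eqP; rewrite -subr_eq0; apply/eqP/(intr_norm_le_half (R := Rdefinitions.R)).
  have -> : (a - (v.1 + k * m%:Z))%:~R = a%:~R - (v.1%:~R + k%:~R * m%:R) :> Rdefinitions.R.
    by rewrite intrB intrD intrM.
  by move: y1E; rewrite y1_eq x1_eq ler_norml => y1E; apply/andP; split; lra.
rewrite (periodic_gequiv L1_periodic (x := v) (y := (a, b))) //.
by exists k; rewrite a_eq b_eq.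
Qed.

Definition transpose (L : int -> int -> nat) : int -> int -> nat := fun a b => L b a.

Lemma segment_meets_swap (m n : nat) (L1 L2 : int -> int -> nat) (p q : pt) :
  segment_meets m n L1 L2 p q ->
  segment_meets n m (transpose L2) (transpose L1) (swap_pair p) (swap_pair q).
Proof.
case=> x [y [[t [t01 [x1E x2E]]] [[a [b y_edge]] [k [y1E y2E]]]]].
exists (swap_pair x), (swap_pair y); split; first by exists t.
split; last by exists k.
by exists b, a; case: y_edge => -[L_ab y_ab]; [right|left].
Qed.

Lemma vertical_segment_meets (m n : nat) (L1 L2 : int -> int -> nat) (v : int * int) :
  (forall a b, L2 (a + m%:Z) (b + n%:Z) = L2 a b) ->
  segment_meets m n L1 L2 (pt_of v) (pt_of (v.1, v.2 + 1)) <-> (0 < L2 v.1 v.2)%N.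
Proof.
move=> L2_periodic.
rewrite -(@horizontal_segment_meets n m (transpose L2) (transpose L1) (swap_pair v)).
  by split=> /segment_meets_swap meets; exact: meets.
by move=> a b; exact: L2_periodic.
Qed.

Definition lattice_vertex (x : int * int) (i : seq nat) (r : nat) : int * int :=
  (x.1 + count (pred1 1%N) (take r i), x.2 + count (pred1 2%N) (take r i)).

Lemma lattice_vertexS (x : int * int) (i : seq nat) (r : nat) : (r < size i)%N ->
  lattice_vertex x i r.+1 =
  ((lattice_vertex x i r).1 + (nth 0%N i r == 1%N),
   (lattice_vertex x i r).2 + (nth 0%N i r == 2%N)).
Proof.
move=> lt_ri; rewrite /lattice_vertex (take_nth 0%N lt_ri) -cats1 !count_cat /=.
by rewrite !addn0 !PoszD !addrA.
Qed.

Lemma sum_pick12 (V : nmodType) (a1 a2 : V) (s : seq nat) :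
  all (fun j => (j == 1%N) || (j == 2%N)) s ->
  \sum_(j <- s) pick12 j a1 a2 = a1 *+ count (pred1 1%N) s + a2 *+ count (pred1 2%N) s.
Proof.
elim: s => [|j s IH]; first by rewrite big_nil !mulr0n addr0.
case/andP=> /orP [] /eqP -> /IH; rewrite big_cons => ->; rewrite /= !mulrS.
  by rewrite addrA.
by rewrite addrCA.
Qed.

Lemma weight_lattice_vertex (m n : nat) (x : int * int) (i : seq nat) (r : nat) :
  all (fun j => (j == 1%N) || (j == 2%N)) i ->
  (weight m n (lattice_vertex x i r))%:~R =
  (weight m n x)%:~R + \sum_(j <- take r i) pick12 j (alpha1 n) (alpha2 m) :> algC.
Proof.
move=> i12; rewrite sum_pick12; last by apply/allP=> j /mem_take; apply: (allP i12).
by rewrite /weight /alpha1 /alpha2 /= !intrD !intrM; ring.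
Qed.

Section FacePathSteps.
Variables (m n : nat) (L1 L2 : int -> int -> nat) (P1 P2 : {poly algC}).
Hypotheses (coprime_mn : coprime m n)
  (L1_periodic : forall a b, L1 (a + m%:Z) (b + n%:Z) = L1 a b)
  (L2_periodic : forall a b, L2 (a + m%:Z) (b + n%:Z) = L2 a b)
  (P1_spec : Ppoly_spec m n L1 (cval1 m n) P1)
  (P2_spec : Ppoly_spec m n L2 (cval2 m n) P2).

Lemma root_step_segment_meets (j : nat) (v : int * int) : (j == 1%N) || (j == 2%N) ->
  root (pick12 j P1 P2) ((weight m n v)%:~R + pick12 j (alpha1 n) (alpha2 m) / 2) <->
  segment_meets m n L1 L2 (pt_of v) (pt_of (v.1 + (j == 1%N), v.2 + (j == 2%N))).
Proof.
case/orP=> /eqP -> /=.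
  rewrite addr0 horizontal_segment_meets //.
  by rewrite (Ppoly_root L1_periodic _ coprime_mn (@cval1E m n) P1_spec).
rewrite addr0 vertical_segment_meets //.
by rewrite (Ppoly_root L2_periodic _ coprime_mn (@cval2E m n) P2_spec).
Qed.

End FacePathSteps.

Theorem mainTheorem15
  (m n : nat) (L1 L2 : int -> int -> nat) (P1 P2 : {poly algC})
  (B : algType algC) (H X1p X1m X2p X2m : B)
  (i : seq nat) (lam x1 x2 : int) :
  coprime m n ->
  periodic_config m n L1 L2 ->
  Ppoly_spec m n L1 (cval1 m n) P1 ->
  Ppoly_spec m n L2 (cval2 m n) P2 ->
  kleinian_rels (alpha1 n) (alpha2 m) P1 P2 H X1p X1m X2p X2m ->
  H_torsion_free H ->
  (1 : B) != 0 ->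
  all (fun j => (j == 1%N) || (j == 2%N)) i ->
  - (n%:Z) * x1 + m%:Z * x2 = lam ->
  ((exists g : {poly algC},
       Xword_star X1m X2m i * Xword X1p X2p i = (H - (lam%:~R)%:A) * horner_alg H g)
   <-> face_path_meets m n L1 L2 x1 x2 i).
Proof.
move=> coprime_mn [L1_periodic [L2_periodic _]] P1_spec P2_spec rels tfree nz i12 <-.
rewrite (Xword_norm _ rels) horner_alg_dvd_root // norm_poly_root.
have step r : (r < size i)%N ->
    root (pick12 (nth 0%N i r) P1 P2)
      ((weight m n (x1, x2))%:~R + \sum_(j <- take r i) pick12 j (alpha1 n) (alpha2 m)
       + pick12 (nth 0%N i r) (alpha1 n) (alpha2 m) / 2) <->
    segment_meets m n L1 L2
      (pt_of (lattice_vertex (x1, x2) i r)) (pt_of (lattice_vertex (x1, x2) i r.+1)).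
  move=> lt_ri; rewrite -(weight_lattice_vertex _ _ _ _ i12) lattice_vertexS //.
  exact/root_step_segment_meets/(allP i12)/mem_nth.
by split=> -[r [lt_ri /(step r lt_ri) meets]]; exists r.
Qed.
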